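(* Consider the SDP pair and one-step ADMM of the context (with $\mathcal A$ surjective and nonempty KKT set). For every $k\in\mathbb N$, $$\|Z^{(k+1)}-Z^{(k)}\|_F^2=\|\mathcal P(X^{(k)}-\widetilde X)\|_F^2+\sigma^2\|\mathcal P^\perp(S^{(k)}-C)\|_F^2,$$ where $\widetilde X\in\mathbb S^n$ is an arbitrary matrix with $\mathcal A\widetilde X=b$, and $$\|Z^{(k+1)}-Z^{(k)}\|_F^2\le\operatorname{dist}^2(Z^{(k)},\mathcal Z_\star)-\operatorname{dist}^2(Z^{(k+1)},\mathcal Z_\star).$$
   Context: $\mathbb S^n$: real symmetric matrices, trace inner product, Frobenius norm; $\Pi_{\mathbb S^n_+}$ projection onto the PSD cone; $\operatorname{dist}(Z,\mathcal S)=\inf_{W\in\mathcal S}\|Z-W\|_F$. SDP pair: min $\langle C,X\rangle$ s.t. $\mathcal AX=b$, $X\succeq0$ / max $b^\top y$ s.t. $\mathcal A^*y+S=C$, $S\succeq0$, with $C,A_i\in\mathbb S^n$, $\mathcal AX=(\langle A_i,X\rangle)_i$ surjective, $\mathcal A^*y=\sum y_iA_i$, KKT set nonempty. $\mathcal P=\mathcal A^*(\mathcal A\mathcal A^* )^{-1}\mathcal A$, $\mathcal P^\perp=\mathrm{Id}-\mathcal P$. For $\sigma>0$ and $Z^{(0)}\in\mathbb S^n$: $Z^{(k+1)}=\mathcal P(-2\Pi_{\mathbb S^n_+}(Z^{(k)})+Z^{(k)})+\Pi_{\mathbb S^n_+}(Z^{(k)})+\mathcal A^*(\mathcal A\mathcal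 A^* )^{-1}b+\sigma\mathcal PC-\sigma C$, $X^{(k)}=\Pi_{\mathbb S^n_+}(Z^{(k)})$, $S^{(k)}=\sigma^{-1}\Pi_{\mathbb S^n_+}(-Z^{(k)})$. $\mathcal Z_\star$ is the set of fixed points of this iteration map. *)

From HB Require Import structures.
From mathcomp Require Import all_boot all_order all_algebra.
From mathcomp Require Import boolp classical_sets reals.
Set Implicit Arguments. Unset Strict Implicit. Unset Printing Implicit Defensive.
Import Order.TTheory GRing.Theory Num.Theory.
Local Open Scope ring_scope.
Local Open Scope classical_set_scope.

Section SDP.
Variables (R : realType) (n m : nat).

Definition symmx (X : 'M[R]_n) : Prop := X^T = X.

Definition fdot (A B : 'M[R]_n) : R := \tr (A^T *m B).
Definition fnorm2 (A : 'M[R]_n) : R := fdot A A.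
Definition fnorm (A : 'M[R]_n) : R := Num.sqrt (fnorm2 A).

Definition psd (X : 'M[R]_n) : Prop :=
  symmx X /\ forall v : 'cV[R]_n, 0 <= (v^T *m X *m v) 0 0.

Definition is_projPSD (Z W : 'M[R]_n) : Prop :=
  psd W /\ forall V, psd V -> fnorm (Z - W) <= fnorm (Z - V).

Definition projPSD (Z : 'M[R]_n) : 'M[R]_n :=
  match pselect (exists W, is_projPSD Z W) with
  | left h => projT1 (cid h)
  | right _ => 0
  end.

Variable (A : 'I_m -> 'M[R]_n).

Definition Aop (X : 'M[R]_n) : 'cV[R]_m := \col_i fdot (A i) X.
Definition Aadj (y : 'cV[R]_m) : 'M[R]_n := \sum_i y i ord0 *: A i.
(* A Aadj as an m x m matrix *)
Definition AAadj : 'M[R]_m := \matrix_(i, j) fdot (A i) (A j).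

Definition Pproj (Z : 'M[R]_n) : 'M[R]_n := Aadj (invmx AAadj *m Aop Z).
Definition Pperp (Z : 'M[R]_n) : 'M[R]_n := Z - Pproj Z.

Variables (b : 'cV[R]_m) (C : 'M[R]_n).

Definition A_surjective : Prop :=
  forall y : 'cV[R]_m, exists X, symmx X /\ Aop X = y.

Definition KKT_nonempty : Prop :=
  exists (X : 'M[R]_n) (y : 'cV[R]_m) (S : 'M[R]_n),
    Aop X = b /\ psd X /\ Aadj y + S = C /\ psd S /\ fdot X S = 0.

Variable (sigma : R).

Definition admm_step (Z : 'M[R]_n) : 'M[R]_n :=
  Pproj (- 2 *: projPSD Z + Z) + projPSD Z + Aadj (invmx AAadj *m b)
  + sigma *: Pproj C - sigma *: C.

Definition Zseq (Z0 : 'M[R]_n) (k : nat) : 'M[R]_n := iter k admm_step Z0.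
Definition Xseq (Z0 : 'M[R]_n) (k : nat) : 'M[R]_n := projPSD (Zseq Z0 k).
Definition Sseq (Z0 : 'M[R]_n) (k : nat) : 'M[R]_n :=
  sigma^-1 *: projPSD (- Zseq Z0 k).

Definition Zstar : set 'M[R]_n := [set Z | symmx Z /\ admm_step Z = Z].

Definition dist (Z : 'M[R]_n) (S : set 'M[R]_n) : R :=
  inf [set fnorm (Z - W) | W in S].

End SDP.

From HB Require Import structures.
From mathcomp Require Import all_boot all_order all_algebra.
From mathcomp Require Import boolp classical_sets reals.
From mathcomp Require Import complex spectral sesquilinear.
From mathcomp Require Import lra.
Set Implicit Arguments. Unset Strict Implicit.
Import Order.TTheory GRing.Theory Num.Theory.
Local Open Scope ring_scope.

(** For symmetric [Z] put [X = projPSD Z] and [S = projPSD (- Z)]. The Moreau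
    decomposition [Z = X - S] with [X, S >= 0] and [<X, S> = 0] turns the
    iteration map into [T Z = Pperp X - Pproj S + c] for a constant [c], so
    that [T Z - Z = Pproj (Xt - X) + Pperp (S - sigma C)], a sum of two orthogonal
    terms: this is the identity.
    For two symmetric points, the increments of [T] and of [Id - T] are
    [Pperp dX - Pproj dS] and [Pproj dX - Pperp dS]; their squared norms add up
    to [|dX|^2 + |dS|^2], which is at most [|dX - dS|^2 = |Z1 - Z2|^2] because
    [<dX, dS> = - <X1, S2> - <X2, S1> <= 0]. So [T] is firmly nonexpansive, and
    comparing [Z] with every fixed point yields the distance inequality.
    The Moreau decomposition comes from the spectral theorem over [R[i]]: the
    real and imaginary parts [P], [Q] of a unitary eigenbasis of [Z] satisfy
    [P P^T + Q Q^T = P^T P + Q^T Q = 1], so they jointly play the role of a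
    real orthogonal eigenbasis. *)

Section FrobeniusInnerProduct.
Variables (R : realType) (n : nat).
Implicit Types (X Y W : 'M[R]_n).

Lemma fdotC X Y : fdot X Y = fdot Y X.
Proof. by rewrite /fdot -mxtrace_tr trmx_mul trmxK. Qed.

Fact fdot_is_scalar X : scalar (fdot X).
Proof. by move=> c Y W; rewrite /fdot mulmxDr -scalemxAr mxtraceD mxtraceZ. Qed.

HB.instance Definition _ X :=
  GRing.isLinear.Build R 'M[R]_n R *%R (fdot X) (fdot_is_scalar X).

Lemma fdotDl X Y W : fdot (X + Y) W = fdot X W + fdot Y W.
Proof. by rewrite !(fdotC _ W) raddfD. Qed.

Lemma fdotBl X Y W : fdot (X - Y) W = fdot X W - fdot Y W.
Proof. by rewrite !(fdotC _ W) raddfB. Qed.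

Lemma fdotZl c X Y : fdot (c *: X) Y = c * fdot X Y.
Proof. by rewrite !(fdotC _ Y) scalarZ. Qed.

Lemma fdot_suml (I : finType) (F : I -> 'M[R]_n) Y :
  fdot (\sum_i F i) Y = \sum_i fdot (F i) Y.
Proof. by rewrite fdotC raddf_sum; apply: eq_bigr => i _; rewrite fdotC. Qed.

Lemma fnorm2E X : fnorm2 X = \sum_i \sum_j X j i ^+ 2.
Proof.
by apply: eq_bigr => i _; rewrite mxE; apply: eq_bigr => j _; rewrite !mxE expr2.
Qed.

Lemma fnorm2_ge0 X : 0 <= fnorm2 X.
Proof. by rewrite fnorm2E; do 2!apply: sumr_ge0 => ? _; apply: sqr_ge0. Qed.

Lemma fnorm2_eq0 X : (fnorm2 X == 0) = (X == 0).
Proof.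
apply/idP/eqP => [|->]; last by rewrite /fnorm2 /fdot mulmx0 mxtrace0.
rewrite fnorm2E psumr_eq0 => [/allP X0|i _]; last first.
  by apply: sumr_ge0 => j _; apply: sqr_ge0.
apply/matrixP => j i; move/implyP: (X0 i (mem_index_enum _)) => /(_ isT).
rewrite psumr_eq0 => [/allP/(_ j (mem_index_enum _))|k _]; last exact: sqr_ge0.
by rewrite sqrf_eq0 mxE => /eqP.
Qed.

Lemma fnorm2D X Y : fnorm2 (X + Y) = fnorm2 X + fnorm2 Y + 2 * fdot X Y.
Proof. by rewrite /fnorm2 fdotDl !raddfD /= (fdotC Y X); lra. Qed.

Lemma fnorm2B X Y : fnorm2 (X - Y) = fnorm2 X + fnorm2 Y - 2 * fdot X Y.
Proof. by rewrite /fnorm2 fdotBl !raddfB /= (fdotC Y X); lra. Qed.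

Lemma fnorm2Z c X : fnorm2 (c *: X) = c ^+ 2 * fnorm2 X.
Proof. by rewrite /fnorm2 fdotZl scalarZ mulrA expr2. Qed.

Lemma fnorm2N X : fnorm2 (- X) = fnorm2 X.
Proof. by rewrite -scaleN1r fnorm2Z sqrrN expr1n mul1r. Qed.

Lemma fnorm2_sub_sym X Y : fnorm2 (X - Y) = fnorm2 (Y - X).
Proof. by rewrite -fnorm2N opprB. Qed.

Lemma sqr_fnorm X : fnorm X ^+ 2 = fnorm2 X.
Proof. by rewrite sqr_sqrtr // fnorm2_ge0. Qed.

Lemma ler_fnorm X Y : (fnorm X <= fnorm Y) = (fnorm2 X <= fnorm2 Y).
Proof. by rewrite ler_sqrt // fnorm2_ge0. Qed.

End FrobeniusInnerProduct.

Section Complexification.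
Variable R : realType.

Definition cmx p q (M : 'M[R]_(p, q)) : 'M[R[i]]_(p, q) := map_mx (real_complex R) M.

Lemma cmx_real p q (M : 'M[R]_(p, q)) : cmx M \is a realmx.
Proof. by apply/mxOverP => i j; rewrite mxE; apply/complex_realP; exists (M i j). Qed.

Lemma cmx_ReIm_inj p q (M N M' N' : 'M[R]_(p, q)) :
  cmx M + 'i *: cmx N = cmx M' + 'i *: cmx N' -> M = M' /\ N = N'.
Proof.
move=> /eqmx_ReiIm; rewrite !cmx_real => /(_ isT isT isT isT).
by case=> /map_mx_inj -> /map_mx_inj ->.
Qed.

Lemma cmx_ReIm p q (M : 'M[R[i]]_(p, q)) :
  M = cmx (map_mx (@complex.Re R) M) + 'i *: cmx (map_mx (@complex.Im R) M).
Proof. by apply/matrixP => i j; rewrite !mxE [LHS]complexE. Qed.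

Lemma mulmx_ReIm p q r (M N : 'M[R]_(p, q)) (M' N' : 'M[R]_(q, r)) :
  (cmx M + 'i *: cmx N) *m (cmx M' + 'i *: cmx N') =
  cmx (M *m M' - N *m N') + 'i *: cmx (M *m N' + N *m M').
Proof.
rewrite /cmx !map_mxD !map_mxN !map_mxM mulmxDl !mulmxDr -!scalemxAl -!scalemxAr.
by rewrite scalerA -expr2 sqr_i scaleN1r scalerDr [RHS]addrAC !addrA.
Qed.

Lemma adjmx_ReIm p q (M N : 'M[R]_(p, q)) :
  ((cmx M + 'i *: cmx N) ^t* )%sesqui = cmx M^T + 'i *: cmx (- N^T).
Proof.
apply/matrixP => i j; rewrite !mxE /=.
change (conjc ((M j i)%:C + 'i * (N j i)%:C) = (M j i)%:C + 'i * (- N j i)%:C)%C.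
by simpc.
Qed.

(* [P + 'i Q] is a unitary matrix of eigenvectors of [Z] over [R[i]]. *)
Lemma symmx_spectral_pair n (Z : 'M[R]_n) : symmx Z ->
  exists (P Q : 'M[R]_n) (d : 'rV[R]_n),
  [/\ P *m P^T + Q *m Q^T = 1%:M, P^T *m P + Q^T *m Q = 1%:M,
      Z *m P = P *m diag_mx d & Z *m Q = Q *m diag_mx d].
Proof.
move=> Zsym; pose Zc := cmx Z.
have Zherm : Zc \is hermsymmx.
  apply: realsym_hermsym; last exact: cmx_real.
  by apply/is_hermitianmxP; rewrite expr0 scale1r map_mx_id // /Zc /cmx map_trmx Zsym.
have /orthomx_spectralP Zdiag := hermitian_normalmx Zherm.
have sp_real := hermitian_spectral_diag_real Zherm.
set U := spectralmx Zc in Zdiag; set sp := spectral_diag Zc in Zdiag sp_real.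
have Uunitary : U \is unitarymx := spectral_unitarymx _.
set M := (U ^t* )%sesqui.
have UM : U *m M = 1%:M by apply/unitarymxP.
have MU : M *m U = 1%:M by rewrite /M -invmx_unitary // mulVmx // spectral_unit.
have ZM : Zc *m M = M *m diag_mx sp.
  by rewrite Zdiag invmx_unitary // -/M -!mulmxA UM mulmx1.
pose P := map_mx (@complex.Re R) M; pose Q := map_mx (@complex.Im R) M.
pose d := map_mx (@complex.Re R) sp.
have EM : M = cmx P + 'i *: cmx Q := cmx_ReIm M.
have Ed : diag_mx sp = cmx (diag_mx d) + 'i *: cmx 0.
  apply/matrixP => i j; rewrite !mxE mulr0 addr0.
  have /complex_realP [k ->] : sp 0 i \is Num.real by move/mxOverP: sp_real; apply.
  by case: eqP => _; rewrite ?mulr1n ?mulr0n.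
have EU : U = (M ^t* )%sesqui by rewrite trmxCK.
have EZ : Zc = cmx Z + 'i *: cmx 0 by rewrite /cmx map_mx0 scaler0 addr0.
have E1 : 1%:M = cmx 1%:M + 'i *: cmx (0 : 'M_n).
  by rewrite /cmx map_mx1 map_mx0 scaler0 addr0.
exists P, Q, d.
move: ZM; rewrite EZ EM Ed !mulmx_ReIm.
move=> /cmx_ReIm_inj []; rewrite !mul0mx !mulmx0 subr0 add0r addr0 => -> ->.
move: UM MU; rewrite EU EM adjmx_ReIm !mulmx_ReIm E1.
move=> /cmx_ReIm_inj [+ _] /cmx_ReIm_inj [+ _].
by rewrite !mulNmx mulmxN !opprK subr0 => PQ_id PQ_idT; split.
Qed.

End Complexification.

Section PSDCone.
Variables (R : realType) (n : nat).
Implicit Types (X Y N : 'M[R]_n) (a : 'rV[R]_n).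

Lemma psdD X Y : psd X -> psd Y -> psd (X + Y).
Proof.
move=> [sX qX] [sY qY]; split; first by rewrite /symmx linearD /= sX sY.
by move=> v; rewrite mulmxDr mulmxDl mxE addr_ge0.
Qed.

Lemma psdZ c X : 0 <= c -> psd X -> psd (c *: X).
Proof.
move=> c0 [sX qX]; split; first by rewrite /symmx linearZ /= sX.
by move=> v; rewrite -scalemxAr -scalemxAl mxE mulr_ge0.
Qed.

Lemma psd_diag_entry_ge0 X j : psd X -> 0 <= X j j.
Proof.
move=> [_ qX]; have := qX (delta_mx j 0).
by rewrite trmx_delta -rowE -colE !mxE.
Qed.

Lemma psd_congr X Y : psd X -> psd (Y^T *m X *m Y).
Proof.
move=> [sX qX]; split; first by rewrite /symmx !trmx_mul trmxK sX mulmxA.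
by move=> v; rewrite -!mulmxA mulmxA -trmx_mul mulmxA; apply: qX.
Qed.

Lemma psd_diag_mx a : (forall j, 0 <= a 0 j) -> psd (diag_mx a).
Proof.
move=> a0; split; first by rewrite /symmx tr_diag_mx.
move=> v; rewrite mxE; apply: sumr_ge0 => j _.
by rewrite mul_mx_diag !mxE mulrAC -expr2 mulr_ge0 ?sqr_ge0.
Qed.

Lemma psd_diag_conj a X : (forall j, 0 <= a 0 j) -> psd (X *m diag_mx a *m X^T).
Proof. by move=> a0; rewrite -{1}(trmxK X); apply/psd_congr/psd_diag_mx. Qed.

Lemma fdot_diag_conj_ge0 N a X : psd N -> (forall j, 0 <= a 0 j) ->
  0 <= fdot N (X *m diag_mx a *m X^T).
Proof.
move=> pN a0; have [sN _] := pN.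
rewrite /fdot sN mulmxA mxtrace_mulC !mulmxA mul_mx_diag.
by apply: sumr_ge0 => j _; rewrite mxE mulr_ge0 //; apply/psd_diag_entry_ge0/psd_congr.
Qed.

End PSDCone.

Section Eigenframe.
Variables (R : realType) (n : nat) (Z : 'M[R]_n) (d : 'rV[R]_n).
Hypothesis Zsym : symmx Z.

Lemma eigvec_cross_commute X Y :
  Z *m X = X *m diag_mx d -> Z *m Y = Y *m diag_mx d ->
  X^T *m Y *m diag_mx d = diag_mx d *m (X^T *m Y).
Proof.
move=> ZX ZY; rewrite -mulmxA -ZY mulmxA -[X^T *m Z]trmxK trmx_mul trmxK Zsym ZX.
by rewrite trmx_mul tr_diag_mx mulmxA.
Qed.

(* Eigenvectors for distinct eigenvalues are orthogonal. *)
Lemma eigvec_cross_disjoint X Y (f g : R -> R) :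
  Z *m X = X *m diag_mx d -> Z *m Y = Y *m diag_mx d -> (forall x, f x * g x = 0) ->
  diag_mx (map_mx f d) *m (X^T *m Y) *m diag_mx (map_mx g d) = 0.
Proof.
move=> ZX ZY fg; apply/matrixP => j k; rewrite mul_mx_diag mul_diag_mx !mxE.
have [djk|djk] := eqVneq (d 0 j) (d 0 k).
  by rewrite mulrAC -djk fg mul0r.
have /matrixP /(_ j k) := eigvec_cross_commute ZX ZY.
rewrite mul_mx_diag mul_diag_mx !mxE mulrC => /eqP.
rewrite -subr_eq0 -mulrBl mulf_eq0 subr_eq0 [d 0 k == _]eq_sym (negPf djk) /= => /eqP ->.
by rewrite mulr0 mul0r.
Qed.

Variables (P Q : 'M[R]_n).
Hypotheses (PQ_id : P *m P^T + Q *m Q^T = 1%:M) (PQ_idT : P^T *m P + Q^T *m Q = 1%:M).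
Hypotheses (ZP : Z *m P = P *m diag_mx d) (ZQ : Z *m Q = Q *m diag_mx d).

Definition eigmx (a : 'rV[R]_n) : 'M[R]_n :=
  P *m diag_mx a *m P^T + Q *m diag_mx a *m Q^T.

Lemma eigmx_id : eigmx d = Z.
Proof. by rewrite /eigmx -ZP -ZQ -!mulmxA -mulmxDr PQ_id mulmx1. Qed.

Lemma eigmxB (a a' : 'rV[R]_n) : eigmx a - eigmx a' = eigmx (a - a').
Proof. by rewrite /eigmx linearB /= !mulmxBr !mulmxBl opprD addrACA. Qed.

Lemma eigmx_psd (a : 'rV[R]_n) : (forall j, 0 <= a 0 j) -> psd (eigmx a).
Proof. by move=> a0; apply: psdD; apply: psd_diag_conj. Qed.

Lemma eigmx_mul_eq0 (f g : R -> R) : (forall x, f x * g x = 0) ->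
  eigmx (map_mx f d) *m eigmx (map_mx g d) = 0.
Proof.
move=> fg; have cross X Y : Z *m X = X *m diag_mx d -> Z *m Y = Y *m diag_mx d ->
    X *m diag_mx (map_mx f d) *m X^T *m (Y *m diag_mx (map_mx g d) *m Y^T) = 0.
  move=> ZX ZY.
  have -> : X *m diag_mx (map_mx f d) *m X^T *m (Y *m diag_mx (map_mx g d) *m Y^T)
      = X *m (diag_mx (map_mx f d) *m (X^T *m Y) *m diag_mx (map_mx g d)) *m Y^T.
    by rewrite !mulmxA.
  by rewrite eigvec_cross_disjoint // mulmx0 mul0mx.
by rewrite /eigmx mulmxDl !mulmxDr !cross // !addr0.
Qed.

Lemma eigval_ge0 j : psd Z -> 0 <= d 0 j.
Proof.
move=> pZ; have -> : d 0 j = (P^T *m Z *m P + Q^T *m Z *m Q) j j.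
  by rewrite -!mulmxA ZP ZQ !mulmxA -mulmxDl PQ_idT mul1mx mxE eqxx mulr1n.
by rewrite mxE addr_ge0 //; apply/psd_diag_entry_ge0/psd_congr.
Qed.

End Eigenframe.

Section Moreau.
Variables (R : realType) (n : nat).
Implicit Types (X Z W N V : 'M[R]_n).

Lemma psd_fdot_ge0 X N : psd X -> psd N -> 0 <= fdot X N.
Proof.
move=> pX pN; have [sN _] := pN.
have [P [Q [d [PQ_id PQ_idT NP NQ]]]] := symmx_spectral_pair sN.
have d0 j := eigval_ge0 PQ_idT NP NQ j pN.
by rewrite -(eigmx_id PQ_id NP NQ) /eigmx raddfD addr_ge0 // fdot_diag_conj_ge0.
Qed.

Lemma symmx_moreau Z : symmx Z ->
  exists W N, [/\ psd W, psd N, Z = W - N & fdot W N = 0].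
Proof.
move=> sZ; have [P [Q [d [PQ_id PQ_idT ZP ZQ]]]] := symmx_spectral_pair sZ.
pose pos (x : R) := Num.max x 0; pose neg (x : R) := Num.max (- x) 0.
have pos0 x : 0 <= pos x by rewrite le_max lexx orbT.
have neg0 x : 0 <= neg x by rewrite le_max lexx orbT.
have pW : psd (eigmx P Q (map_mx pos d)) by apply: eigmx_psd => j; rewrite mxE.
have pN : psd (eigmx P Q (map_mx neg d)) by apply: eigmx_psd => j; rewrite mxE.
exists (eigmx P Q (map_mx pos d)), (eigmx P Q (map_mx neg d)); split => //.
- rewrite eigmxB -{1}(eigmx_id PQ_id ZP ZQ); congr eigmx.
  by apply/matrixP => i j; rewrite !mxE /pos /neg !maxEle; do 2!case: leP => ?; lra.
- have [sW _] := pW; rewrite /fdot sW (eigmx_mul_eq0 sZ ZP ZQ) ?mxtrace0 // => x.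
  by rewrite /pos /neg !maxEle; do 2!case: leP => ?; rewrite ?mulr0 ?mul0r //; lra.
Qed.

Lemma moreau_fnorm2 Z W N V : psd W -> psd N -> Z = W - N -> fdot W N = 0 ->
  psd V -> fnorm2 (Z - W) + fnorm2 (W - V) <= fnorm2 (Z - V).
Proof.
move=> pW pN -> WN pV.
have -> : W - N - W = - N by rewrite addrAC subrr add0r.
have -> : W - N - V = (W - V) - N by rewrite addrAC.
rewrite fnorm2N (fnorm2B (W - V)) fdotBl WN.
have := psd_fdot_ge0 pV pN; lra.
Qed.

Lemma projPSD_moreau Z W N : psd W -> psd N -> Z = W - N -> fdot W N = 0 ->
  projPSD Z = W.
Proof.
move=> pW pN EZ WN; have near_W := moreau_fnorm2 pW pN EZ WN.
rewrite /projPSD; case: pselect => [h|[]]; last first.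
  exists W; split => // V /near_W; rewrite ler_fnorm; have := fnorm2_ge0 (W - V); lra.
case: cid => /= W' [pW' near_W']; apply/eqP; rewrite eq_sym -subr_eq0 -fnorm2_eq0.
have := near_W _ pW'; move: (near_W' _ pW); rewrite ler_fnorm.
by have := fnorm2_ge0 (W - W'); lra.
Qed.

Lemma projPSD_decomp Z : symmx Z ->
  [/\ psd (projPSD Z), psd (projPSD (- Z)), Z = projPSD Z - projPSD (- Z)
    & fdot (projPSD Z) (projPSD (- Z)) = 0].
Proof.
move=> /symmx_moreau [W [N [pW pN EZ WN]]].
rewrite (projPSD_moreau pW pN EZ WN) (projPSD_moreau pN pW _ _) ?EZ ?opprB //.
by rewrite fdotC.
Qed.

Lemma fdot_projPSD_sub_le0 Z Z' : symmx Z -> symmx Z' ->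
  fdot (projPSD Z - projPSD Z') (projPSD (- Z) - projPSD (- Z')) <= 0.
Proof.
move=> /projPSD_decomp [pX pS _ XS] /projPSD_decomp [pX' pS' _ XS'].
rewrite fdotBl !raddfB /= XS XS'.
by have := psd_fdot_ge0 pX pS'; have := psd_fdot_ge0 pX' pS; lra.
Qed.

End Moreau.

Section ConstraintOperator.
Variables (R : realType) (n m : nat) (A : 'I_m -> 'M[R]_n).
Implicit Types (X Y : 'M[R]_n) (y : 'cV[R]_m).

Fact Aop_is_linear : linear (Aop A).
Proof. by move=> c X Y; apply/matrixP => i j; rewrite !mxE linearP. Qed.

HB.instance Definition _ :=
  GRing.isLinear.Build R 'M[R]_n 'cV[R]_m _ (Aop A) Aop_is_linear.

Fact Aadj_is_linear : linear (Aadj A).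
Proof.
move=> c y y'; rewrite /Aadj scaler_sumr -big_split /=.
by apply: eq_bigr => i _; rewrite !mxE scalerDl scalerA.
Qed.

HB.instance Definition _ :=
  GRing.isLinear.Build R 'cV[R]_m 'M[R]_n _ (Aadj A) Aadj_is_linear.

Fact Pproj_is_linear : linear (Pproj A).
Proof. by move=> c X Y; rewrite /Pproj linearP mulmxDr -scalemxAr linearP. Qed.

HB.instance Definition _ :=
  GRing.isLinear.Build R 'M[R]_n 'M[R]_n _ (Pproj A) Pproj_is_linear.

Fact Pperp_is_linear : linear (Pperp A).
Proof. by move=> c X Y; rewrite /Pperp linearP scalerBr addrACA opprD. Qed.

HB.instance Definition _ :=
  GRing.isLinear.Build R 'M[R]_n 'M[R]_n _ (Pperp A) Pperp_is_linear.

Lemma fdot_Aadj y X : fdot (Aadj A y) X = (y^T *m Aop A X) 0 0.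
Proof. by rewrite /Aadj fdot_suml mxE; apply: eq_bigr => i _; rewrite fdotZl !mxE. Qed.

Lemma Aop_Aadj y : Aop A (Aadj A y) = AAadj A *m y.
Proof.
apply/matrixP => i j; rewrite (ord1 j) !mxE fdotC fdot_Aadj mxE.
by apply: eq_bigr => k _; rewrite !mxE fdotC mulrC.
Qed.

Lemma AAadj_sym : (AAadj A)^T = AAadj A.
Proof. by apply/matrixP => i j; rewrite !mxE fdotC. Qed.

Hypothesis Asym : forall i, symmx (A i).

Lemma Aadj_sym y : symmx (Aadj A y).
Proof.
by rewrite /symmx /Aadj linear_sum; apply: eq_bigr => i _; rewrite linearZ /= Asym.
Qed.

Hypothesis Asurj : A_surjective A.

Lemma Aadj_eq0 y : Aadj A y = 0 -> y = 0.
Proof.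
move=> y0; apply/matrixP => i j; rewrite (ord1 j) mxE.
have [X [_ AX]] := Asurj (delta_mx i 0).
by move: (fdot_Aadj y X); rewrite y0 /fdot trmx0 mul0mx mxtrace0 AX -colE !mxE.
Qed.

Lemma AAadj_unit : AAadj A \in unitmx.
Proof.
rewrite -row_free_unit; apply: inj_row_free => u uG.
rewrite -[u]trmxK; apply/eqP; rewrite trmx_eq0; apply/eqP/Aadj_eq0/eqP.
rewrite -fnorm2_eq0 /fnorm2 fdot_Aadj Aop_Aadj -AAadj_sym -trmx_mul uG.
by rewrite trmx0 mulmx0 mxE.
Qed.

Lemma Aop_Pproj X : Aop A (Pproj A X) = Aop A X.
Proof. by rewrite /Pproj Aop_Aadj mulmxA mulmxV ?AAadj_unit // mul1mx. Qed.

Lemma Aop_Pperp X : Aop A (Pperp A X) = 0.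
Proof. by rewrite /Pperp linearB /= Aop_Pproj subrr. Qed.

Lemma Pproj_Aadj y : Pproj A (Aadj A y) = Aadj A y.
Proof. by rewrite /Pproj Aop_Aadj mulKmx // AAadj_unit. Qed.

Lemma fdot_Pproj_Pperp X Y : fdot (Pproj A X) (Pperp A Y) = 0.
Proof. by rewrite fdot_Aadj Aop_Pperp mulmx0 mxE. Qed.

Lemma fnorm2_Pproj_Pperp X Y :
  fnorm2 (Pproj A X + Pperp A Y) = fnorm2 (Pproj A X) + fnorm2 (Pperp A Y).
Proof. by rewrite fnorm2D fdot_Pproj_Pperp mulr0 addr0. Qed.

Lemma fnorm2_Pproj_Pperp_sub X Y :
  fnorm2 (Pproj A X - Pperp A Y) = fnorm2 (Pproj A X) + fnorm2 (Pperp A Y).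
Proof. by rewrite -linearN fnorm2_Pproj_Pperp linearN fnorm2N. Qed.

Lemma fnorm2_Pyth X : fnorm2 X = fnorm2 (Pproj A X) + fnorm2 (Pperp A X).
Proof. by rewrite -fnorm2_Pproj_Pperp /Pperp addrC subrK. Qed.

End ConstraintOperator.

Local Open Scope classical_set_scope.

Section Distance.
Variables (R : realType) (n : nat).
Implicit Types (Z W : 'M[R]_n) (S : set 'M[R]_n).

Lemma dist_ge0 Z S : S !=set0 -> 0 <= dist Z S.
Proof.
move=> [W SW]; apply: lb_le_inf; first by exists (fnorm (Z - W)), W.
by move=> _ [V _ <-]; apply: sqrtr_ge0.
Qed.

Lemma dist_le Z W S : S W -> dist Z S <= fnorm (Z - W).
Proof.
move=> SW; apply: ge_inf; last by exists W.
by exists 0 => _ [V _ <-]; apply: sqrtr_ge0.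
Qed.

Lemma dist2_fejer S Z Z' : S !=set0 ->
  (forall W, S W -> fnorm2 (Z' - W) + fnorm2 (Z' - Z) <= fnorm2 (Z - W)) ->
  fnorm2 (Z' - Z) <= dist Z S ^+ 2 - dist Z' S ^+ 2.
Proof.
move=> S0 firm; have d'0 := dist_ge0 Z' S0.
suff : Num.sqrt (fnorm2 (Z' - Z) + dist Z' S ^+ 2) <= dist Z S.
  rewrite -(ler_sqr (sqrtr_ge0 _)) ?nnegrE ?dist_ge0 // sqr_sqrtr; first lra.
  by rewrite addr_ge0 ?fnorm2_ge0 ?sqr_ge0.
have [W SW] := S0; apply: lb_le_inf; first by exists (fnorm (Z - W)), W.
move=> _ [V SV <-]; rewrite /fnorm ler_sqrt ?fnorm2_ge0 //.
have := firm V SV; have := dist_le Z' SV.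
rewrite -(ler_sqr d'0) ?nnegrE ?sqrtr_ge0 // sqr_fnorm; lra.
Qed.

End Distance.

Section ADMMStep.
Variables (R : realType) (n m : nat) (A : 'I_m -> 'M[R]_n).
Variables (b : 'cV[R]_m) (C : 'M[R]_n) (sigma : R).
Hypotheses (Asym : forall i, symmx (A i)) (Csym : symmx C).
Hypotheses (Asurj : A_surjective A) (sigma_gt0 : 0 < sigma).
Local Notation T := (admm_step A b C sigma).
Local Notation x0 := (Aadj A (invmx (AAadj A) *m b)).
Local Notation shift := (x0 - sigma *: Pperp A C).
Implicit Types (X Z : 'M[R]_n).

Lemma Pproj_feasible X : Aop A X = b -> Pproj A X = x0.
Proof. by rewrite /Pproj => ->. Qed.

Lemma admm_stepE Z : symmx Z ->
  T Z = Pperp A (projPSD Z) - Pproj A (projPSD (- Z)) + shift.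
Proof.
move=> /projPSD_decomp [_ _ EZ _]; rewrite /admm_step /Pperp.
have -> : Pproj A (-2 *: projPSD Z + Z)
        = - Pproj A (projPSD Z) - Pproj A (projPSD (- Z)).
  rewrite {2}EZ -raddfN -raddfB; congr Pproj.
  by apply/matrixP => i j; rewrite !mxE; lra.
move: (Pproj A (projPSD Z)) (Pproj A (projPSD (- Z))) (Pproj A C) => PX PS PC.
by apply/matrixP => i j; rewrite !mxE; lra.
Qed.

Lemma admm_step_sym Z : symmx Z -> symmx (T Z).
Proof.
move=> sZ; have [[sX _] _ _ _] := projPSD_decomp sZ.
rewrite /symmx /admm_step !(linearD, linearN, linearZ) /= /Pproj.
by rewrite !(Aadj_sym Asym) sX Csym.
Qed.

Lemma Zseq_sym Z0 k : symmx Z0 -> symmx (Zseq A b C sigma Z0 k).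
Proof. by move=> sZ0; elim: k => //= k; apply: admm_step_sym. Qed.

Lemma admm_step_subE Z Xt : symmx Z -> Aop A Xt = b ->
  T Z - Z = Pproj A (Xt - projPSD Z) + sigma *: Pperp A (sigma^-1 *: projPSD (- Z) - C).
Proof.
move=> sZ AXt; have [_ _ EZ _] := projPSD_decomp sZ.
rewrite admm_stepE // -(Pproj_feasible AXt); move: EZ.
move: (projPSD Z) (projPSD (- Z)) => X S ->.
have -> : sigma *: Pperp A (sigma^-1 *: S - C) = Pperp A (S - sigma *: C).
  by rewrite -linearZ /= scalerBr scalerA mulfV ?gt_eqF // scale1r.
rewrite /Pperp !linearB !linearZ /=.
move: (Pproj A X) (Pproj A S) (Pproj A C) (Pproj A Xt) => PX PS PC PXt.
by apply/matrixP => i j; rewrite !mxE; lra.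
Qed.

Lemma fnorm2_admm_step_sub Z Xt : symmx Z -> Aop A Xt = b ->
  fnorm2 (T Z - Z) = fnorm2 (Pproj A (projPSD Z - Xt))
     + sigma ^+ 2 * fnorm2 (Pperp A (sigma^-1 *: projPSD (- Z) - C)).
Proof.
move=> sZ AXt; rewrite (admm_step_subE sZ AXt) -linearZ_LR.
by rewrite (fnorm2_Pproj_Pperp Asurj) linearZ_LR fnorm2Z -opprB linearN fnorm2N.
Qed.

Lemma admm_step_firm Z1 Z2 : symmx Z1 -> symmx Z2 ->
  fnorm2 (T Z1 - T Z2) + fnorm2 ((Z1 - T Z1) - (Z2 - T Z2)) <= fnorm2 (Z1 - Z2).
Proof.
move=> s1 s2; have mono := fdot_projPSD_sub_le0 s1 s2.
have [_ _ E1 _] := projPSD_decomp s1; have [_ _ E2 _] := projPSD_decomp s2.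
rewrite !admm_stepE //; move: mono E1 E2.
move: (projPSD Z1) (projPSD (- Z1)) (projPSD Z2) (projPSD (- Z2)).
move=> X1 S1 X2 S2 mono -> ->.
have -> : Pperp A X1 - Pproj A S1 + shift - (Pperp A X2 - Pproj A S2 + shift)
        = Pperp A (X1 - X2) - Pproj A (S1 - S2).
  rewrite /Pperp !linearB /=.
  move: (Pproj A X1) (Pproj A X2) (Pproj A S1) (Pproj A S2) (Pproj A C) => ? ? ? ? ?.
  by apply/matrixP => i j; rewrite !mxE; lra.
have -> : X1 - S1 - (Pperp A X1 - Pproj A S1 + shift)
          - (X2 - S2 - (Pperp A X2 - Pproj A S2 + shift))
        = Pproj A (X1 - X2) - Pperp A (S1 - S2).
  rewrite /Pperp !linearB /=.
  move: (Pproj A X1) (Pproj A X2) (Pproj A S1) (Pproj A S2) (Pproj A C) => ? ? ? ? ?.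
  by apply/matrixP => i j; rewrite !mxE; lra.
have -> : X1 - S1 - (X2 - S2) = (X1 - X2) - (S1 - S2).
  by apply/matrixP => i j; rewrite !mxE; lra.
rewrite fnorm2_sub_sym !(fnorm2_Pproj_Pperp_sub Asurj) (fnorm2B (X1 - X2)).
by rewrite (fnorm2_Pyth Asurj (X1 - X2)) (fnorm2_Pyth Asurj (S1 - S2)); lra.
Qed.

(* A KKT point [(X, y, S)] gives the fixed point [X - sigma S]. *)
Lemma Zstar_nonempty : KKT_nonempty A b C -> Zstar A b C sigma !=set0.
Proof.
move=> [X [y [S [AX [pX [ES [pS XS]]]]]]].
have pS' : psd (sigma *: S) by apply: psdZ => //; apply: ltW.
have XS' : fdot X (sigma *: S) = 0 by rewrite linearZ /= XS mulr0.
have [[sX _] [sS _]] := (pX, pS').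
have sZ : symmx (X - sigma *: S) by rewrite /symmx linearB /= sX sS.
exists (X - sigma *: S); split => //; rewrite admm_stepE //.
rewrite (projPSD_moreau pX pS' erefl XS') opprB.
rewrite (projPSD_moreau pS' pX erefl _); last by rewrite fdotC.
rewrite -(Pproj_feasible AX) -ES /Pperp !linearD !linearZ /= (Pproj_Aadj Asurj).
move: (Pproj A X) (Aadj A y) => PX Ay.
by apply/matrixP => i j; rewrite !mxE; lra.
Qed.

End ADMMStep.

Theorem lemma4 (R : realType) (n m : nat) (A : 'I_m -> 'M[R]_n)
  (b : 'cV[R]_m) (C : 'M[R]_n) (sigma : R) (Z0 : 'M[R]_n) :
  (forall i, symmx (A i)) -> symmx C ->
  A_surjective A -> KKT_nonempty A b C ->
  0 < sigma -> symmx Z0 ->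
  forall k : nat,
    (forall Xt : 'M[R]_n, symmx Xt -> Aop A Xt = b ->
       fnorm2 (Zseq A b C sigma Z0 k.+1 - Zseq A b C sigma Z0 k)
       = fnorm2 (Pproj A (Xseq A b C sigma Z0 k - Xt))
         + sigma ^+ 2 * fnorm2 (Pperp A (Sseq A b C sigma Z0 k - C)))
    /\
    fnorm2 (Zseq A b C sigma Z0 k.+1 - Zseq A b C sigma Z0 k)
    <= dist (Zseq A b C sigma Z0 k) (Zstar A b C sigma) ^+ 2
       - dist (Zseq A b C sigma Z0 k.+1) (Zstar A b C sigma) ^+ 2.
Proof.
move=> Asym Csym Asurj KKT sigma_gt0 Z0sym k.
have sZ := Zseq_sym b sigma Asym Csym k Z0sym.
have -> : Zseq A b C sigma Z0 k.+1 = admm_step A b C sigma (Zseq A b C sigma Z0 k) by [].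
split=> [Xt _ AXt|]; first exact: fnorm2_admm_step_sub.
apply: dist2_fejer; first exact: Zstar_nonempty.
move=> W [sW TW]; have := admm_step_firm b C sigma Asurj sZ sW.
by rewrite TW subrr subr0 (fnorm2_sub_sym (Zseq _ _ _ _ _ _)).
Qed.
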